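(* Under the hypotheses and notation of the context (including $\beta=4\eta(E)/t$ and the assumption $\sum_{e\in E:\,i\in\rho(e)}\eta(e)\le\beta$ for every $i$ with $|W_i|>1$), for every edge $f=f_{ij}\in F$ let $\psi(f)=\omega(i,j)/w(\sigma(i,j))$ and $\phi(f)=\max(\psi(f),\mathrm{st}_T(f))$. Then for every $i$ with $|W_i|>1$, \[ \sum_{f\in F:\ i\in\rho(f)}\phi(f)\le2\beta. \]
   Context: Weighted edges $w[u,v]$ ($u\ne v$, $w>0$) on a vertex set $V$; $w(e)$ is the weight of $e$; $T$ is a spanning tree on $V$ with positive weights; $t>1$ is an integer. Resistance of an edge is $1/w$, of a path the sum over its edges; for $e=w[u,v]$, $T(e)$ is the path in $T$ from $u$ to $v$, $\mathrm{st}_T(e)=w\cdot\mathrm{res}(T(e))$, $\eta(e)=\max(\mathrm{st}_T(e),1)$, $\eta(E)=\sum_{e\in E}\eta(e)$. A $(T,E)$-decomposition: sets $W_1,\dots,W_h$ covering $V$, each inducing a subtree of $T$ (possibly a single vertex), pairwise intersecting in at most one vertex, with $\rho$ assigning to each edge $(u,v)\in E$ either $\{i\}$ with $u,v\in W_i$ or $\{i,j\}$ ($i\ne j$) with one endpoint in $W_i$ and the other in $W_j$. For $i\ne j$, $\sigma(i,j)$ is the edge $e\in E$ with $\rho(e)=\{i,j\}$ maximizing $w(e)/\eta(e)$ (ties broken by a fixed order), undefined if none exists. $F$ is the set of edges $f_{ij}$, one for each unordered pair $\{i,j\}$ ($i\ne j$) with $\sigma(i,j)$ defined, where $f_{ij}$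 has the endpoints of $\sigma(i,j)$ and weight $\omega(i,j)=\sum_{e\in E:\rho(e)=\{i,j\}}w(e)$; $\rho(f_{ij})=\{i,j\}$. *)

From HB Require Import structures.
From mathcomp Require Import all_boot all_order all_algebra.
Set Implicit Arguments. Unset Strict Implicit. Unset Printing Implicit Defensive.
Import Order.TTheory GRing.Theory Num.Theory.
Local Open Scope ring_scope.

Section Defs.
Variables (R : realFieldType) (V : finType).

Definition path_res (tw : V -> V -> R) (u : V) (p : seq V) : R :=
  \sum_(xy <- zip (u :: p) p) (tw xy.1 xy.2)^-1.

Definition tree_path (tadj : rel V) (u v : V) (p : seq V) : bool :=
  [&& path tadj u p, last u p == v & uniq (u :: p)].

Definition spanning_tree (tadj : rel V) (tw : V -> V -> R) : Prop :=
  [/\ symmetric tadj, irreflexive tadj,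
      (forall u v, tadj u v -> 0 < tw u v /\ tw u v = tw v u) &
      (forall u v, exists! p, tree_path tadj u v p)].

(* st_T of an edge of weight wt between u and v, tp u v being the T-path *)
Definition stretch (tw : V -> V -> R) (tp : V -> V -> seq V) (wt : R) (u v : V) : R :=
  wt * path_res tw u (tp u v).

Definition etaf tw tp (wt : R) (u v : V) : R := Num.max (stretch tw tp wt u v) 1.

Definition induces_subtree (tadj : rel V) (W : {set V}) : Prop :=
  W != set0 /\
  forall u v, u \in W -> v \in W ->
    connect [rel x y | [&& tadj x y, x \in W & y \in W]] u v.

Variables (E : finType) (src dst : E -> V) (h : nat).

Definition decomposition (tadj : rel V) (W : 'I_h -> {set V})
    (rho : E -> {set 'I_h}) : Prop :=
  [/\ (forall x, exists i, x \in W i),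
      (forall i, induces_subtree tadj (W i)),
      (forall i j, i != j -> (#|W i :&: W j| <= 1)%N) &
      (forall e,
         (exists i, [/\ rho e = [set i], src e \in W i & dst e \in W i]) \/
         (exists i j, [/\ i != j, rho e = [set i; j] &
              ((src e \in W i /\ dst e \in W j) \/
               (src e \in W j /\ dst e \in W i))]))].

(* sigma i j : the edge e with rho e = {i,j} maximizing w/eta (None if none);
   ties broken arbitrarily but consistently (sigma i j = sigma j i) *)
Definition sigma_spec (w eta : E -> R) (rho : E -> {set 'I_h})
    (sigma : 'I_h -> 'I_h -> option E) : Prop :=
  forall i j, i != j ->
    sigma i j = sigma j i /\
    match sigma i j with
    | None => forall e, rho e != [set i; j]
    | Some s => rho s = [set i; j] /\
        forall e, rho e = [set i; j] -> w e / eta e <= w s / eta s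
    end.

Definition omega (w : E -> R) (rho : E -> {set 'I_h}) (i j : 'I_h) : R :=
  \sum_(e | rho e == [set i; j]) w e.

(* phi(f_ij) = max(psi(f_ij), st_T(f_ij)), f_ij has endpoints of sigma i j
   and weight omega i j; 0 if f_ij does not exist *)
Definition phi tw tp (w : E -> R) rho (sigma : 'I_h -> 'I_h -> option E)
    (i j : 'I_h) : R :=
  match sigma i j with
  | None => 0
  | Some s => Num.max (omega w rho i j / w s)
                      (stretch tw tp (omega w rho i j) (src s) (dst s))
  end.

End Defs.

(* Each phi(f_ij) is at most the total eta of the edges that f_ij replaces:
   psi(f_ij) because sigma(i,j) maximizes w/eta and eta >= 1, and st_T(f_ij)
   because the stretch is linear in the weight and st_T(sigma(i,j)) <= eta.
   Every edge e with i in rho(e) is replaced by at most one f_ij, so summing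
   over j bounds the left-hand side by the eta-load of W_i, which is <= beta. *)

From HB Require Import structures.
From mathcomp Require Import all_boot all_order all_algebra.
Import Order.TTheory GRing.Theory Num.Theory.
Set Implicit Arguments. Unset Strict Implicit. Unset Printing Implicit Defensive.
Local Open Scope ring_scope.

Lemma setU1_partner_inj (I : finType) (i j k : I) :
  j != i -> k != i -> [set i; j] = [set i; k] -> j = k.
Proof.
move=> ji ki eq_ijk; have : j \in [set i; k] by rewrite -eq_ijk !inE eqxx orbT.
by rewrite !inE (negbTE ji) => /eqP.
Qed.

Lemma sum_partners_le_sum_incident (R : numDomainType) (I E : finType)
    (rho : E -> {set I}) (i : I) (F : E -> R) :
  (forall e, 0 <= F e) ->
  \sum_(j | j != i) \sum_(e | rho e == [set i; j]) F e <=
  \sum_(e | i \in rho e) F e.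
Proof.
move=> F_ge0; rewrite (exchange_big_dep xpredT) //= [leRHS]big_mkcond /=.
apply: ler_sum => e _.
case: (pickP (fun j => (j != i) && (rho e == [set i; j]))) => [k /andP [ki /eqP rho_e] | no_partner].
  have partner_k j : (j != i) && (rho e == [set i; j]) = (j == k).
    apply/andP/eqP => [[ji /eqP]|->]; last by rewrite ki rho_e.
    by rewrite rho_e => /esym; apply: setU1_partner_inj.
  by rewrite (eq_bigl (pred1 k) _ partner_k) big_pred1_eq rho_e setU11.
by rewrite big_pred0 //; case: ifP.
Qed.

Lemma sum_le_sum_mul_max_ratio (R : numFieldType) (I : finType) (P : pred I)
    (a b : I -> R) (r : R) :
  (forall e, P e -> 0 < b e) -> (forall e, P e -> a e / b e <= r) ->
  \sum_(e | P e) a e <= (\sum_(e | P e) b e) * r.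
Proof.
move=> b_gt0 ratio_le; rewrite mulr_suml; apply: ler_sum => e Pe.
by rewrite -ler_pdivrMl ?b_gt0 // mulrC ratio_le.
Qed.

Section ReplacementEdge.
Variables (R : realFieldType) (V : finType) (tw : V -> V -> R) (tp : V -> V -> seq V).

Lemma stretchZ (c x : R) (u v : V) :
  stretch tw tp (c * x) u v = c * stretch tw tp x u v.
Proof. by rewrite /stretch mulrA. Qed.

Variables (E : finType) (src dst : E -> V) (w eta : E -> R) (h : nat).
Variables (rho : E -> {set 'I_h}) (sigma : 'I_h -> 'I_h -> option E).
Hypothesis w_gt0 : forall e, 0 < w e.
Hypothesis eta_ge1 : forall e, 1 <= eta e.
Hypothesis stretch_le_eta : forall e, stretch tw tp (w e) (src e) (dst e) <= eta e.
Hypothesis sigmaP : sigma_spec w eta rho sigma.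

Lemma phi_le_sum_eta (i j : 'I_h) : i != j ->
  phi src dst tw tp w rho sigma i j <= \sum_(e | rho e == [set i; j]) eta e.
Proof.
move=> ij; have [_] := sigmaP ij; rewrite /phi.
case: (sigma i j) => [s [_ s_max] | _]; last by apply: sumr_ge0 => e _; apply: le_trans (eta_ge1 e).
set S := \sum_(e | _) eta e; set om := omega w rho i j.
have eta_gt0 e : 0 < eta e by apply: lt_le_trans (eta_ge1 e).
have psi_le : om / w s <= S / eta s.
  rewrite ler_pdivrMr // mulrAC -mulrA.
  apply: sum_le_sum_mul_max_ratio => [e _ | e /eqP]; [exact: eta_gt0 | exact: s_max].
have S_ge0 : 0 <= S by apply: sumr_ge0 => e _; apply/ltW.
have om_ge0 : 0 <= om by apply: sumr_ge0 => e _; apply/ltW.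
rewrite ge_max; apply/andP; split.
  by apply: le_trans psi_le _; rewrite ler_pdivrMr // ler_peMr.
rewrite -{1}(divfK (lt0r_neq0 (w_gt0 s)) om) stretchZ.
apply: le_trans (ler_wpM2l (divr_ge0 om_ge0 (ltW (w_gt0 s))) (stretch_le_eta s)) _.
by rewrite -ler_pdivlMr.
Qed.

End ReplacementEdge.

Theorem lemma10p3 (R : realFieldType) (V : finType) (tadj : rel V)
    (tw : V -> V -> R) (tp : V -> V -> seq V)
    (E : finType) (src dst : E -> V) (w : E -> R) (t h : nat)
    (W : 'I_h -> {set V}) (rho : E -> {set 'I_h})
    (sigma : 'I_h -> 'I_h -> option E) :
  let eta := fun e => etaf tw tp (w e) (src e) (dst e) in
  let beta := 4 * (\sum_e eta e) / t%:R in
  spanning_tree tadj tw ->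
  (forall u v, tree_path tadj u v (tp u v)) ->
  (forall e, src e != dst e) ->
  (forall e, 0 < w e) ->
  (1 < t)%N ->
  decomposition src dst tadj W rho ->
  sigma_spec w eta rho sigma ->
  (forall i, (1 < #|W i|)%N -> \sum_(e | i \in rho e) eta e <= beta) ->
  forall i, (1 < #|W i|)%N ->
    \sum_(j | j != i) phi src dst tw tp w rho sigma i j <= 2 * beta.
Proof.
move=> eta beta _ _ _ w_gt0 _ _ sigmaP load_le i Wi_gt1.
have eta_ge1 e : 1 <= eta e by rewrite le_max lexx orbT.
have stretch_le_eta e : stretch tw tp (w e) (src e) (dst e) <= eta e by rewrite le_max lexx.
have eta_ge0 e : 0 <= eta e by apply: le_trans (eta_ge1 e).
have beta_ge0 : 0 <= beta by rewrite divr_ge0 ?mulr_ge0 ?sumr_ge0.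
have phi_le j : j != i -> phi src dst tw tp w rho sigma i j <= \sum_(e | rho e == [set i; j]) eta e.
  by rewrite eq_sym => ij; apply: phi_le_sum_eta.
apply: le_trans (ler_sum _ phi_le) _.
apply: le_trans (sum_partners_le_sum_incident rho i eta_ge0) _.
by apply: le_trans (load_le i Wi_gt1) _; rewrite ler_peMl // ler1n.
Qed.
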